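(* Let $G$ be a finitely generated group and let $H=G/K$, where $K$ is the normal subgroup of $G$ generated by finitely many elements $r_1,\dots,r_m\in G$ together with all values $v_j(g_1,\dots,g_{k_j})$, $(g_1,\dots,g_{k_j})\in G^{k_j}$, of finitely many words $v_1,\dots,v_p$ (each $v_j$ an element of a free group of rank $k_j$). If $G$ has CFQ (respectively ReFQ, respectively co-ReFQ), then so does $H$.
   Context: Let $G$ be generated by a finite set $S$. A marked finite group is a pair $(F,f)$ with $F$ a finite group (given by its multiplication table) and $f:S\to F$ a function. $G$ has CFQ if there is an algorithm which, given $(F,f)$, decides whether $f$ extends to a group homomorphism $G\to F$; ReFQ if there is an algorithm halting exactly on those $(F,f)$ for which $f$ extends; co-ReFQ if there is an algorithm halting exactly on those $(F,f)$ for which $f$ does not extend. These properties are independent of the finite generating set chosen. *)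

From HB Require Import structures.
From mathcomp Require Import all_boot monoid.

Set Implicit Arguments.
Unset Strict Implicit.
Unset Printing Implicit Defensive.

Inductive prog : Type :=
| PZero
| PSucc
| PProj (i : nat)
| PComp (f : prog) (gs : list prog)
| PRec (f g : prog)
| PMu (f : prog).

(* Fuel-indexed evaluator (arguments with missing entries default to 0).
   [ev k p xs = Some y] means the computation of p on xs terminates with
   output y within fuel k. *)
Fixpoint ev (k : nat) (p : prog) (xs : seq nat) {struct k} : option nat :=
  match k with
  | 0 => None
  | k'.+1 =>
    match p with
    | PZero => Some 0
    | PSucc => Some (head 0 xs).+1
    | PProj i => Some (nth 0 xs i)
    | PComp f gs =>
        let fix evs (gs : seq prog) : option (seq nat) :=
          match gs with
          | [::] => Some [::]
          | g :: gs' =>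
              match ev k' g xs, evs gs' with
              | Some y, Some ys => Some (y :: ys)
              | _, _ => None
              end
          end in
        match evs gs with Some ys => ev k' f ys | None => None end
    | PRec f g =>
        let fix rc (n : nat) : option nat :=
          match n with
          | 0 => ev k' f (behead xs)
          | n'.+1 =>
              match rc n' with
              | Some y => ev k' g [:: n', y & behead xs]
              | None => None
              end
          end in
        rc (head 0 xs)
    | PMu f =>
        let fix srch (j i : nat) : option nat :=
          match j with
          | 0 => None
          | j'.+1 =>
              match ev k' f (i :: xs) with
              | Some 0 => Some i
              | Some _ => srch j' i.+1
              | None => None
              end
          end in
        srch k' 0
    end
  end.

Definition outputs (p : prog) (x y : nat) : Prop :=
  exists k, ev k p [:: x] = Some y.

Definition halts (p : prog) (x : nat) : Prop := exists y, outputs p x y.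

(* A code c decodes (via the bijection CodeSeq.decode : nat -> seq nat)*)
(* into [:: n ; multiplication table (n*n entries, row-major) ;        *)
(*          values f(s_0), ..., f(s_(d-1))]                            *)
(* where the elements of F are 0, ..., n-1.                            *)

Definition mfg_order (c : nat) : nat := head 0 (CodeSeq.decode c).
Definition mfg_mul (c : nat) (a b : nat) : nat :=
  nth 0 (CodeSeq.decode c) (1 + a * mfg_order c + b).
Definition mfg_val (c : nat) (i : nat) : nat :=
  nth 0 (CodeSeq.decode c) (1 + mfg_order c * mfg_order c + i).

Definition valid_mfg (d : nat) (c : nat) : Prop :=
  let n := mfg_order c in
  let mt := mfg_mul c in
  [/\ 0 < n /\ size (CodeSeq.decode c) = 1 + n * n + d,
      (forall a b, a < n -> b < n -> mt a b < n),
      (forall i, i < d -> mfg_val c i < n),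
      (forall a b e, a < n -> b < n -> e < n -> mt (mt a b) e = mt a (mt b e))
    & (exists2 e, e < n &
        forall a, a < n ->
          [/\ mt e a = a, mt a e = a &
              (exists2 b, b < n & mt a b = e /\ mt b a = e)])].

Section Groups.
Local Open Scope group_scope.
Variable G : groupType.

(* a word in k letters: list of (letter, inverted?) *)
Definition word (k : nat) := seq ('I_k * bool).

Definition eval_word (k : nat) (a : 'I_k -> G) (w : word k) : G :=
  foldr (fun ib acc => (if ib.2 then (a ib.1)^-1 else a ib.1) * acc) 1 w.

Definition generates (d : nat) (gen : 'I_d -> G) : Prop :=
  forall g : G, exists w : word d, g = eval_word gen w.

(* g lies in the normal subgroup generated by the elements satisfying X:
   g is a finite product of conjugates of elements of X and their inverses *)
Definition in_normal_closure (X : G -> Prop) (g : G) : Prop :=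
  exists l : seq (G * G * bool),
    (forall t, t \in l -> X t.1.1) /\
    g = foldr (fun t acc =>
                 ((if t.2 then (t.1.1)^-1 else t.1.1) ^ t.1.2) * acc) 1 l.

Definition multiplicative_map (H : groupType) (pi : G -> H) : Prop :=
  forall x y, pi (x * y) = pi x * pi y.

Definition extends (d : nat) (gen : 'I_d -> G) (c : nat) : Prop :=
  exists phi : G -> nat,
    [/\ forall x, phi x < mfg_order c,
        forall x y, phi (x * y) = mfg_mul c (phi x) (phi y)
      & forall i : 'I_d, phi (gen i) = mfg_val c i].

End Groups.

Definition CFQ_wrt (G : groupType) (d : nat) (gen : 'I_d -> G) : Prop :=
  exists p : prog, forall c, valid_mfg d c ->
    exists2 b, outputs p c b & (b = 0 <-> extends gen c).

Definition ReFQ_wrt (G : groupType) (d : nat) (gen : 'I_d -> G) : Prop :=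
  exists p : prog, forall c, valid_mfg d c -> (halts p c <-> extends gen c).

Definition coReFQ_wrt (G : groupType) (d : nat) (gen : 'I_d -> G) : Prop :=
  exists p : prog, forall c, valid_mfg d c -> (halts p c <-> ~ extends gen c).

Definition finitely_generated (G : groupType) : Prop :=
  exists d (gen : 'I_d -> G), generates gen.

Definition CFQ (G : groupType) : Prop :=
  exists d (gen : 'I_d -> G), generates gen /\ CFQ_wrt gen.
Definition ReFQ (G : groupType) : Prop :=
  exists d (gen : 'I_d -> G), generates gen /\ ReFQ_wrt gen.
Definition coReFQ (G : groupType) : Prop :=
  exists d (gen : 'I_d -> G), generates gen /\ coReFQ_wrt gen.

From HB Require Import structures.
From mathcomp Require Import all_boot monoid zify.
From Stdlib Require Import Classical.

Set Implicit Arguments.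
Unset Strict Implicit.
Unset Printing Implicit Defensive.

(* A marking f : S -> F of a finite group extends to H = G/K iff it extends to
   a homomorphism phi : G -> F that kills K.  Since K is the normal closure of
   the r_i and of the values of the laws v_j, phi kills K iff phi (r_i) = 1 for
   every i and every v_j vanishes on phi(G) = <f(S)>.  Both conditions can be
   decided from (F, f) alone: each r_i is a fixed word in S, and <f(S)> is a
   computable subset of the finite group F, so checking v_j on it is a finite
   search.  Combining the procedure for G with this decidable test transfers
   CFQ, ReFQ and co-ReFQ from G to H. *)

(** * Mu-recursive programs *)

(* The local fixpoints of [ev], named so that its unfolding equations can be stated. *)
Definition evs (k : nat) (xs : seq nat) :=
  fix evs (gs : seq prog) : option (seq nat) :=
    match gs with
    | [::] => Some [::]
    | g :: gs' =>
        match ev k g xs, evs gs' with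
        | Some y, Some ys => Some (y :: ys)
        | _, _ => None
        end
    end.

Definition evrec (k : nat) (f g : prog) (t : seq nat) :=
  fix rc (n : nat) : option nat :=
    match n with
    | 0 => ev k f t
    | n'.+1 =>
        match rc n' with
        | Some y => ev k g [:: n', y & t]
        | None => None
        end
    end.

Definition evmu (k : nat) (f : prog) (xs : seq nat) :=
  fix srch (j i : nat) : option nat :=
    match j with
    | 0 => None
    | j'.+1 =>
        match ev k f (i :: xs) with
        | Some 0 => Some i
        | Some _ => srch j' i.+1
        | None => None
        end
    end.

Lemma ev_PComp k f gs xs :
  ev k.+1 (PComp f gs) xs = if evs k xs gs is Some ys then ev k f ys else None.
Proof. by []. Qed.

Lemma ev_PRec k f g xs :
  ev k.+1 (PRec f g) xs = evrec k f g (behead xs) (head 0 xs).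
Proof. by []. Qed.

Lemma ev_PMu k f xs : ev k.+1 (PMu f) xs = evmu k f xs k 0.
Proof. by []. Qed.

Lemma evs_cons k xs g gs : evs k xs (g :: gs) =
  if (ev k g xs, evs k xs gs) is (Some y, Some ys) then Some (y :: ys) else None.
Proof. by []. Qed.

Lemma evrecS k f g t n : evrec k f g t n.+1 =
  if evrec k f g t n is Some y then ev k g [:: n, y & t] else None.
Proof. by []. Qed.

Lemma evmuS k f xs j i : evmu k f xs j.+1 i =
  match ev k f (i :: xs) with
  | Some 0 => Some i | Some _ => evmu k f xs j i.+1 | None => None end.
Proof. by []. Qed.

Section Monotonicity.
Variable k : nat.
Hypothesis ev_monoS_k : forall p xs y, ev k p xs = Some y -> ev k.+1 p xs = Some y.

Lemma evs_monoS xs gs ys : evs k xs gs = Some ys -> evs k.+1 xs gs = Some ys.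
Proof.
elim: gs ys => [//|g gs IH] ys; rewrite !evs_cons.
case E1: (ev k g xs) => [a|//]; rewrite (ev_monoS_k E1).
by case E2: (evs k xs gs) => [b|//]; rewrite (IH _ E2).
Qed.

Lemma evrec_monoS f g t n y : evrec k f g t n = Some y -> evrec k.+1 f g t n = Some y.
Proof.
elim: n y => [|n IH] y; first exact: ev_monoS_k.
by rewrite !evrecS; case E: (evrec k f g t n) => [a|//] /ev_monoS_k; rewrite (IH _ E).
Qed.

Lemma evmu_monoS f xs j i y : evmu k f xs j i = Some y -> evmu k.+1 f xs j.+1 i = Some y.
Proof.
elim: j i => [//|j IH] i; rewrite !evmuS.
by case E: (ev k f (i :: xs)) => [[|a]|//]; rewrite (ev_monoS_k E) //; apply: IH.
Qed.

End Monotonicity.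

Lemma ev_monoS k p xs y : ev k p xs = Some y -> ev k.+1 p xs = Some y.
Proof.
elim: k p xs y => [//|k IH] [||i|f gs|f g|f] xs y //.
- rewrite !ev_PComp; case E: (evs k xs gs) => [ys|//].
  by rewrite (evs_monoS IH E); apply: IH.
- by rewrite !ev_PRec; apply: evrec_monoS.
- by rewrite !ev_PMu; apply: evmu_monoS.
Qed.

Lemma leq_step_ind (P : nat -> Prop) k k' :
  (forall j, P j -> P j.+1) -> k <= k' -> P k -> P k'.
Proof. by move=> PS /subnK <-; elim: (k' - k) => // j IH /IH; apply: PS. Qed.

Lemma ev_mono k k' p xs y : k <= k' -> ev k p xs = Some y -> ev k' p xs = Some y.
Proof. by apply: (@leq_step_ind (fun j => ev j p xs = Some y)) => j; apply: ev_monoS. Qed.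

Lemma evs_mono k k' xs gs ys : k <= k' -> evs k xs gs = Some ys -> evs k' xs gs = Some ys.
Proof.
by apply: (@leq_step_ind (fun j => evs j xs gs = Some ys)) => j; apply: (evs_monoS (@ev_monoS j)).
Qed.

Lemma evrec_mono k k' f g t n y :
  k <= k' -> evrec k f g t n = Some y -> evrec k' f g t n = Some y.
Proof.
apply: (@leq_step_ind (fun j => evrec j f g t n = Some y)) => j.
exact: (evrec_monoS (@ev_monoS j)).
Qed.

Definition computes (p : prog) (xs : seq nat) (y : nat) := exists k, ev k p xs = Some y.

Lemma computes_det p xs y y' : computes p xs y -> computes p xs y' -> y = y'.
Proof.
move=> [k1 E1] [k2 E2].
have := ev_mono (leq_maxl k1 k2) E1; rewrite (ev_mono (leq_maxr k1 k2) E2).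
by case.
Qed.

Lemma computes_PZero xs : computes PZero xs 0. Proof. by exists 1. Qed.
Lemma computes_PSucc xs : computes PSucc xs (head 0 xs).+1. Proof. by exists 1. Qed.
Lemma computes_PProj i xs : computes (PProj i) xs (nth 0 xs i). Proof. by exists 1. Qed.

Fixpoint computes_all (gs : seq prog) (xs ys : seq nat) : Prop :=
  match gs, ys with
  | [::], [::] => True
  | g :: gs, y :: ys => computes g xs y /\ computes_all gs xs ys
  | _, _ => False
  end.

Lemma computes_allP gs xs ys : computes_all gs xs ys <-> exists k, evs k xs gs = Some ys.
Proof.
elim: gs ys => [|g gs IH] [|y ys]; cbn [computes_all]; split => //.
- by exists 0.
- by case.
- by case=> k; rewrite evs_cons; case: (ev k g xs) => //; case: (evs k xs gs).
- case=> [[k1 E1] /IH [k2 E2]]; exists (maxn k1 k2); rewrite evs_cons.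
  by rewrite (ev_mono (leq_maxl k1 k2) E1) (evs_mono (leq_maxr k1 k2) E2).
- case=> k; rewrite evs_cons.
  case E1: (ev k g xs) => [a|//]; case E2: (evs k xs gs) => [b|//] [<- <-].
  by split; [exists k | apply/IH; exists k].
Qed.

Lemma computes_PComp f gs xs y :
  computes (PComp f gs) xs y <-> exists ys, computes_all gs xs ys /\ computes f ys y.
Proof.
split.
- case=> [[|k]] //; rewrite ev_PComp.
  case E: (evs k xs gs) => [ys|//] Ef; exists ys; split; last by exists k.
  by apply/computes_allP; exists k.
- case=> ys [/computes_allP [k1 E1] [k2 E2]]; exists (maxn k1 k2).+1; rewrite ev_PComp.
  by rewrite (evs_mono (leq_maxl k1 k2) E1) (ev_mono (leq_maxr k1 k2) E2).
Qed.

Lemma computes_PRec0 f g t y : computes (PRec f g) (0 :: t) y <-> computes f t y.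
Proof.
split; first by case=> [[|k]] // E; exists k.
by case=> k E; exists k.+1.
Qed.

Lemma computes_PRecS f g n t y : computes (PRec f g) (n.+1 :: t) y <->
  exists y', computes (PRec f g) (n :: t) y' /\ computes g [:: n, y' & t] y.
Proof.
split.
- case=> [[|k]] //; rewrite ev_PRec evrecS.
  case E: (evrec k f g t n) => [a|//] Eg; exists a; split; last by exists k.
  by exists k.+1.
- case=> y' [[[|k1]] //]; rewrite ev_PRec => E1 [k2 E2].
  exists (maxn k1 k2).+1; rewrite ev_PRec evrecS.
  by rewrite (evrec_mono (leq_maxl k1 k2) E1) (ev_mono (leq_maxr k1 k2) E2).
Qed.

Definition loop := PMu PSucc.

Lemma loop_diverges xs y : ~ computes loop xs y.
Proof.
case=> [[|k]] //; rewrite ev_PMu.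
suff -> : forall j i, evmu k PSucc xs j i = None by [].
by elim=> [//|j IH] i; rewrite evmuS; case: k IH => [|k] IH //=.
Qed.

(** * Primitive recursive expressions *)

(* [ERec b z s] iterates [s] [b] times starting from [z]; inside [s], variable 0
   is the iteration counter, variable 1 the accumulator, and variable [i + 2]
   the outer variable [i]. *)
Inductive prexp :=
| EVar of nat
| EZero
| ESucc of prexp
| EPred of prexp
| ERec of prexp & prexp & prexp.

Definition scons (x : nat) (env : nat -> nat) : nat -> nat :=
  fun i => if i is i'.+1 then env i' else x.

Fixpoint primrec (z : nat) (s : nat -> nat -> nat) (n : nat) : nat :=
  if n is n'.+1 then s n' (primrec z s n') else z.

Fixpoint sem (e : prexp) (env : nat -> nat) : nat :=
  match e with
  | EVar i => env i
  | EZero => 0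
  | ESucc e => (sem e env).+1
  | EPred e => (sem e env).-1
  | ERec b z s =>
      primrec (sem z env) (fun i y => sem s (scons i (scons y env))) (sem b env)
  end.

Fixpoint arity (e : prexp) : nat :=
  match e with
  | EVar i => i.+1
  | EZero => 0
  | ESucc e | EPred e => arity e
  | ERec b z s => maxn (arity b) (maxn (arity z) (arity s - 2))
  end.

Lemma sem_EVar i env : sem (EVar i) env = env i. Proof. by []. Qed.
Lemma sem_ESucc e env : sem (ESucc e) env = (sem e env).+1. Proof. by []. Qed.

Lemma sem_ERec b z s env : sem (ERec b z s) env =
  primrec (sem z env) (fun i y => sem s (scons i (scons y env))) (sem b env).
Proof. by []. Qed.

Lemma primrecS z s n : primrec z s n.+1 = s n (primrec z s n).
Proof. by []. Qed.

Lemma eq_primrec z s s' n : (forall i y, s i y = s' i y) -> primrec z s n = primrec z s' n.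
Proof. by move=> E; elim: n => //= n ->. Qed.

Lemma eq_sem_arity e env env' :
  (forall i, i < arity e -> env i = env' i) -> sem e env = sem e env'.
Proof.
elim: e env env' => [i||e IH|e IH|b IHb z IHz s IHs] env env' /= E.
- exact: E.
- by [].
- by rewrite (IH _ env').
- by rewrite (IH _ env').
- rewrite (IHb _ env'); last by move=> i hi; apply: E; rewrite leq_max hi.
  rewrite (IHz _ env'); last by move=> i hi; apply: E; rewrite !leq_max hi orbT.
  apply: eq_primrec => n y; apply: IHs => -[|[|i]] //= hi; apply: E.
  by rewrite !leq_max; apply/orP; right; apply/orP; right; lia.
Qed.

Lemma eq_sem e env env' : env =1 env' -> sem e env = sem e env'.
Proof. by move=> E; apply: eq_sem_arity => i _; apply: E. Qed.

Definition PPred := PRec PZero (PProj 0).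

(* [PRec] only hands the tail of its input to its subprograms, so the
   environment needed by [z] and [s] is recomputed by projections. *)
Fixpoint compile (e : prexp) : prog :=
  match e with
  | EVar i => PProj i
  | EZero => PZero
  | ESucc e => PComp PSucc [:: compile e]
  | EPred e => PComp PPred [:: compile e]
  | ERec b z s => PComp (PRec (compile z) (compile s))
                    (compile b :: map PProj (iota 0 (maxn (arity z) (arity s - 2))))
  end.

Lemma computes_all_PProj xs l : computes_all (map PProj l) xs (map (nth 0 xs) l).
Proof. by elim: l => //= i l IH; split => //; apply: computes_PProj. Qed.

Lemma computes_PPred n : computes PPred [:: n] n.-1.
Proof.
elim: n => [|n IH]; first exact/computes_PRec0/computes_PZero.
by apply/computes_PRecS; exists n.-1; split => //; apply: computes_PProj.
Qed.

Lemma computes_compile e xs : computes (compile e) xs (sem e (nth 0 xs)).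
Proof.
elim: e xs => [i||e IH|e IH|b IHb z IHz s IHs] xs /=.
- exact: computes_PProj.
- exact: computes_PZero.
- by apply/computes_PComp; exists [:: sem e (nth 0 xs)]; split => //; apply: computes_PSucc.
- by apply/computes_PComp; exists [:: sem e (nth 0 xs)]; split => //; apply: computes_PPred.
- set N := maxn (arity z) (arity s - 2).
  set t := map (nth 0 xs) (iota 0 N).
  have Et i : i < N -> nth 0 t i = nth 0 xs i.
    by move=> hi; rewrite /t (nth_map 0) ?size_iota // nth_iota.
  apply/computes_PComp; exists (sem b (nth 0 xs) :: t); split.
    by split; [apply: IHb | apply: computes_all_PProj].
  elim: (sem b (nth 0 xs)) => [|n IHn] /=.
    apply/computes_PRec0; rewrite (@eq_sem_arity _ _ (nth 0 t)); first exact: IHz.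
    by move=> i hi; rewrite Et // leq_max hi.
  set y := primrec _ _ n.
  apply/computes_PRecS; exists y; split; first exact: IHn.
  rewrite (@eq_sem_arity _ _ (nth 0 [:: n, y & t])); first exact: IHs.
  by move=> [|[|i]] //= hi; rewrite Et //; rewrite leq_max; apply/orP; right; lia.
Qed.

Fixpoint shift_at (c : nat) (e : prexp) : prexp :=
  match e with
  | EVar i => EVar (if i < c then i else i.+1)
  | EZero => EZero
  | ESucc e => ESucc (shift_at c e)
  | EPred e => EPred (shift_at c e)
  | ERec b z s => ERec (shift_at c b) (shift_at c z) (shift_at c.+2 s)
  end.

Definition insert_at (c x : nat) (env : nat -> nat) : nat -> nat :=
  fun i => if i < c then env i else if i == c then x else env i.-1.

Lemma sem_shift_at e c x env : sem (shift_at c e) (insert_at c x env) = sem e env.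
Proof.
elim: e c env => [i||e IH|e IH|b IHb z IHz s IHs] c env /=.
- rewrite /insert_at; case: (ltnP i c) => hi; first by rewrite hi.
  by rewrite ltnNge (leqW hi) /= gtn_eqF.
- by [].
- by rewrite IH.
- by rewrite IH.
- rewrite IHb IHz; apply: eq_primrec => i y.
  rewrite -(IHs c.+2 (scons i (scons y env))); apply: eq_sem => -[|[|j]] //=.
  rewrite /insert_at /= !ltnS eqSS; case: ltnP => // h1; case: eqP => [->|h2].
    by rewrite eqSS eqxx.
  by rewrite eqSS (introF eqP h2); case: j h1 h2 => [|j] //; rewrite leqn0 => /eqP ->.
Qed.

Definition shift := shift_at 0.

Lemma sem_shift e x env : sem (shift e) (scons x env) = sem e env.
Proof. by rewrite -(sem_shift_at e 0 x env); apply: eq_sem => -[|j]. Qed.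

Lemma sem_shift_at1 e x y env :
  sem (shift_at 1 e) (scons y (scons x env)) = sem e (scons y env).
Proof. by rewrite -(sem_shift_at e 1 x (scons y env)); apply: eq_sem => -[|[|j]]. Qed.

Definition EAdd a b := ERec a b (ESucc (EVar 1)).
Definition ESub a b := ERec b a (EPred (EVar 1)).
Definition EMul a b := ERec a EZero (EAdd (EVar 1) (shift (shift b))).
Fixpoint ENat n := if n is n'.+1 then ESucc (ENat n') else EZero.
Definition ESum b body := ERec b EZero (EAdd (EVar 1) (shift_at 1 body)).
Definition EPow a b := ERec b (ENat 1) (EMul (EVar 1) (shift (shift a))).
Definition EIter n z step := ERec n z (shift step).
Definition ENot a := ESub (ENat 1) a.
Definition ELeq a b := ENot (ESub a b).
Definition EEq a b := EMul (ELeq a b) (ELeq b a).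
Definition EAnd a b := EMul a b.
Definition EImp a b := EAdd (ENot a) b.
Definition EForall b P := ENot (ESum b (ENot P)).
Definition EDiv a b := ESum a (ELeq (EMul (ESucc (EVar 0)) (shift b)) (shift a)).
Definition EMod a b := ESub a (EMul (EDiv a b) b).

Lemma nat_of_bool_eq0 (b : bool) : b = 0 :> nat <-> ~~ b.
Proof. by case: b. Qed.

Section Combinators.
Implicit Types (a b : prexp) (env : nat -> nat).

Lemma sem_EAdd env a b : sem (EAdd a b) env = sem a env + sem b env.
Proof. by rewrite /EAdd sem_ERec; elim: (sem a env) => //= n ->. Qed.

Lemma sem_ESub env a b : sem (ESub a b) env = sem a env - sem b env.
Proof.
rewrite /ESub sem_ERec; elim: (sem b env) => [|n IH]; first by rewrite subn0.
by rewrite /= IH subnS.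
Qed.

Lemma sem_EMul env a b : sem (EMul a b) env = sem a env * sem b env.
Proof.
rewrite /EMul sem_ERec; elim: (sem a env) => // n IH.
by rewrite primrecS sem_EAdd !sem_shift IH mulSn addnC.
Qed.

Lemma sem_ENat env n : sem (ENat n) env = n.
Proof. by elim: n => //= n ->. Qed.

Lemma sem_ESum env b body :
  sem (ESum b body) env = \sum_(i < sem b env) sem body (scons i env).
Proof.
rewrite /ESum sem_ERec; elim: (sem b env) => [|n IH]; first by rewrite big_ord0.
by rewrite big_ord_recr primrecS sem_EAdd IH sem_shift_at1.
Qed.

Lemma sem_EPow env a b : sem (EPow a b) env = sem a env ^ sem b env.
Proof.
rewrite /EPow sem_ERec; elim: (sem b env) => [|n IH]; first by rewrite sem_ENat.
by rewrite primrecS sem_EMul !sem_shift IH expnS mulnC.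
Qed.

Lemma sem_EIter env n z step :
  sem (EIter n z step) env = iter (sem n env) (fun x => sem step (scons x env)) (sem z env).
Proof.
rewrite /EIter sem_ERec; elim: (sem n env) => // j IH.
by rewrite /= IH -(sem_shift step j); apply: eq_sem => -[|[|i]].
Qed.

Lemma sem_ENot env a : sem (ENot a) env = (sem a env == 0).
Proof. by rewrite /ENot sem_ESub sem_ENat; case: (sem a env). Qed.

Lemma sem_ELeq env a b : sem (ELeq a b) env = (sem a env <= sem b env).
Proof. by rewrite /ELeq sem_ENot sem_ESub subn_eq0. Qed.

Lemma sem_EEq env a b : sem (EEq a b) env = (sem a env == sem b env).
Proof. by rewrite /EEq sem_EMul !sem_ELeq eqn_leq; case: (_ <= _); case: (_ <= _). Qed.

Lemma sem_EAnd env a b :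
  (sem (EAnd a b) env != 0) = (sem a env != 0) && (sem b env != 0).
Proof. by rewrite /EAnd sem_EMul muln_eq0 negb_or. Qed.

Lemma sem_EImp env a b :
  (sem (EImp a b) env != 0) = (sem a env != 0) ==> (sem b env != 0).
Proof. by rewrite /EImp sem_EAdd sem_ENot addn_eq0; case: (sem a env); case: (sem b env). Qed.

Lemma sem_EForall env b P :
  sem (EForall b P) env = [forall i : 'I_(sem b env), sem P (scons i env) != 0].
Proof.
rewrite /EForall sem_ENot sem_ESum sum_nat_eq0; congr nat_of_bool.
by apply: eq_forallb => i; rewrite sem_ENot; case: (sem P _).
Qed.

Lemma sem_EForallP env b P : (sem (EForall b P) env != 0) <->
  (forall i, i < sem b env -> sem P (scons i env) != 0).
Proof.
rewrite sem_EForall; case: forallP => [H|nH]; split => //.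
- by move=> _ i hi; exact: (H (Ordinal hi)).
- by move=> H; case: nH => i; apply: H.
Qed.

Lemma sum_ltn_ord n q : q <= n -> \sum_(i < n) (i < q) = q.
Proof.
suff -> : \sum_(i < n) (i < q) = minn n q by move=> hq; lia.
elim: n => [|n IH]; first by rewrite big_ord0 min0n.
by rewrite big_ord_recr /= IH; case: (ltnP n q) => h /=; lia.
Qed.

Lemma sem_EDiv env a b : 0 < sem b env -> sem (EDiv a b) env = sem a env %/ sem b env.
Proof.
move=> hb; rewrite /EDiv sem_ESum -[RHS](@sum_ltn_ord (sem a env)) ?leq_div //.
by apply: eq_bigr => i _; rewrite sem_ELeq sem_EMul /= !sem_shift leq_divRL.
Qed.

Lemma sem_EMod env a b : 0 < sem b env -> sem (EMod a b) env = sem a env %% sem b env.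
Proof.
move=> hb; rewrite /EMod sem_ESub sem_EMul sem_EDiv //.
by rewrite {1}(divn_eq (sem a env) (sem b env)) addKn.
Qed.

End Combinators.

(** * Decoding marked finite groups *)

(* For [c > 0], [val2 c] is the 2-adic valuation of [c], written as a bounded
   sum so that it is primitive recursive. *)
Definition val2 (c : nat) := \sum_(i < c) (2 ^ i.+1 %| c).
Definition code_tail (c : nat) := c %/ 2 ^ (val2 c).+1.

Lemma val2_code_tail x y :
  val2 (2 ^ x * y.*2.+1) = x /\ code_tail (2 ^ x * y.*2.+1) = y.
Proof.
set c := 2 ^ x * _.
have val2c : val2 c = x.
  rewrite /val2 -[RHS](@sum_ltn_ord c x); last first.
    by apply: leq_trans (ltnW (ltn_expl x (ltnSn 1))) _; rewrite /c leq_pmulr.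
  apply: eq_bigr => i _; rewrite /c Gauss_dvdl ?dvdn_Pexp2l //.
  by apply: coprimeXl; rewrite coprime2n /= odd_double.
split => //; rewrite /code_tail val2c /c expnS mulnC [2 * _]mulnC divnMA mulnK ?expn_gt0 //.
by rewrite -addn1 -muln2 divnMDl // divn_small // addn0.
Qed.

Lemma decode_cons c : 0 < c -> CodeSeq.decode c = val2 c :: CodeSeq.decode (code_tail c).
Proof.
move=> c_gt0; have := CodeSeq.decodeK c.
case: (CodeSeq.decode c) => [|x s] /= E; first by move: c_gt0; rewrite -E.
rewrite -E /=; have [-> ->] := val2_code_tail x (CodeSeq.code s).
by rewrite CodeSeq.codeK.
Qed.

Lemma nth_decode c j : nth 0 (CodeSeq.decode c) j = val2 (iter j code_tail c).
Proof.
have tail0 : code_tail 0 = 0 by rewrite /code_tail div0n.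
have val20 : val2 0 = 0 by rewrite /val2 big_ord0.
elim: j c => [|j IH] [|c].
- by rewrite val20.
- by rewrite decode_cons.
- suff -> : iter j.+1 code_tail 0 = 0 by rewrite val20 nth_nil.
  by elim: j {IH} => //= j ->.
- by rewrite iterSr decode_cons // -IH.
Qed.

Definition EVal2 x := ESum x (EEq (EMod (shift x) (EPow (ENat 2) (ESucc (EVar 0)))) EZero).
Definition ETail x := EDiv x (EPow (ENat 2) (ESucc (EVal2 x))).
Definition ENthCode x j := EVal2 (EIter j x (ETail (EVar 0))).

Lemma sem_EVal2 env x : sem (EVal2 x) env = val2 (sem x env).
Proof.
rewrite /EVal2 sem_ESum; apply: eq_bigr => i _.
by rewrite sem_EEq sem_EMod sem_EPow sem_ENat /= ?sem_shift ?expn_gt0.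
Qed.

Lemma sem_ETail env x : sem (ETail x) env = code_tail (sem x env).
Proof. by rewrite /ETail sem_EDiv sem_EPow sem_ENat sem_ESucc sem_EVal2 ?expn_gt0. Qed.

Lemma sem_ENthCode env x j :
  sem (ENthCode x j) env = nth 0 (CodeSeq.decode (sem x env)) (sem j env).
Proof.
rewrite /ENthCode sem_EVal2 sem_EIter nth_decode; congr val2.
by apply: eq_iter => y; rewrite sem_ETail.
Qed.

Definition EOrder c := ENthCode c EZero.
Definition EMfgMul c a b := ENthCode c (EAdd (ENat 1) (EAdd (EMul a (EOrder c)) b)).
Definition EMfgVal c i := ENthCode c (EAdd (ENat 1) (EAdd (EMul (EOrder c) (EOrder c)) i)).

Lemma sem_EOrder env c : sem (EOrder c) env = mfg_order (sem c env).
Proof. by rewrite /EOrder sem_ENthCode /mfg_order; case: CodeSeq.decode. Qed.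

Lemma sem_EMfgMul env c a b :
  sem (EMfgMul c a b) env = mfg_mul (sem c env) (sem a env) (sem b env).
Proof. by rewrite /EMfgMul sem_ENthCode !sem_EAdd sem_EMul sem_ENat sem_EOrder addnA. Qed.

Lemma sem_EMfgVal env c i : sem (EMfgVal c i) env = mfg_val (sem c env) (sem i env).
Proof. by rewrite /EMfgVal sem_ENthCode !sem_EAdd sem_EMul sem_ENat sem_EOrder addnA. Qed.

(* The number of [x < B] lying below every witness of [P]: the least witness,
   provided one exists below [B]. *)
Definition least_below (B : nat) (P : pred nat) := \sum_(x < B) [forall y : 'I_x.+1, ~~ P y].

Definition ELeast b P := ESum b (EForall (ESucc (EVar 0)) (ENot (shift_at 1 P))).

Lemma sem_ELeast env b P :
  sem (ELeast b P) env = least_below (sem b env) (fun y => sem P (scons y env) != 0).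
Proof.
rewrite /ELeast sem_ESum; apply: eq_bigr => x _.
rewrite sem_EForall; congr nat_of_bool; apply: eq_forallb => y.
by rewrite sem_ENot sem_shift_at1; case: (sem P _).
Qed.

Lemma least_belowE B (P : pred nat) x0 :
  x0 < B -> P x0 -> (forall y, y < x0 -> ~~ P y) -> least_below B P = x0.
Proof.
move=> hB Px0 hy; rewrite /least_below -[RHS](@sum_ltn_ord B x0) ?(ltnW hB) //.
apply: eq_bigr => x _; congr nat_of_bool; case: (ltnP x x0) => hx.
- by apply/forallP => y; apply: hy; apply: leq_ltn_trans hx; rewrite -ltnS.
- by apply/forallP => /(_ (Ordinal (hx : x0 < x.+1))); rewrite Px0.
Qed.

Lemma eq_least_below B (P Q : pred nat) : P =1 Q -> least_below B P = least_below B Q.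
Proof.
by move=> E; apply: eq_bigr => x _; congr nat_of_bool; apply: eq_forallb => y; rewrite E.
Qed.

Definition bitn (X x : nat) := odd (X %/ 2 ^ x).

Section MarkedGroupOperations.
Variable c : nat.
Local Notation n := (mfg_order c).
Local Notation mul := (mfg_mul c).

(* The identity is the unique idempotent of a group. *)
Definition mfg_one := least_below n (fun y => mul y y == y).
Definition mfg_inv a := least_below n (fun y => mul a y == mfg_one).

Definition mfg_word k (a : 'I_k -> nat) (w : word k) : nat :=
  foldr (fun ib acc => mul (if ib.2 then mfg_inv (a ib.1) else a ib.1) acc) mfg_one w.

(* Subsets of [[0, n)] are coded by bit masks [X < 2 ^ n]; [a] lies in the
   subgroup generated by the [d] marked elements iff it lies in every subset
   that contains the identity and is closed under left multiplication by them. *)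
Definition gen_closed d X := bitn X mfg_one /\
  forall x, x < n -> forall i, i < d -> bitn X x -> bitn X (mul (mfg_val c i) x).

Definition in_gen d a := forall X, X < 2 ^ n -> gen_closed d X -> bitn X a.

End MarkedGroupOperations.

Lemma mfg_word_cons c k (a : 'I_k -> nat) l b w : mfg_word c a ((l, b) :: w) =
  mfg_mul c (if b then mfg_inv c (a l) else a l) (mfg_word c a w).
Proof. by []. Qed.

Lemma eq_mfg_word c k (a b : 'I_k -> nat) w : a =1 b -> mfg_word c a w = mfg_word c b w.
Proof. by move=> E; elim: w => //= [[l bl] w] ->; rewrite E. Qed.

Definition EOne c := ELeast (EOrder c) (EEq (EMfgMul (shift c) (EVar 0) (EVar 0)) (EVar 0)).
Definition EInv c a :=
  ELeast (EOrder c) (EEq (EMfgMul (shift c) (shift a) (EVar 0)) (EOne (shift c))).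
Definition EWord c k (a : 'I_k -> prexp) (w : word k) :=
  foldr (fun ib acc => EMfgMul c (if ib.2 then EInv c (a ib.1) else a ib.1) acc) (EOne c) w.
Definition EBit X x := EMod (EDiv X (EPow (ENat 2) x)) (ENat 2).
Definition EGenClosed d c X := EAnd (EBit X (EOne c))
  (EForall (EOrder c) (EForall (ENat d) (EImp (EBit (shift (shift X)) (EVar 1))
     (EBit (shift (shift X))
        (EMfgMul (shift (shift c)) (EMfgVal (shift (shift c)) (EVar 0)) (EVar 1)))))).
Definition EInGen d c a := EForall (EPow (ENat 2) (EOrder c))
  (EImp (EGenClosed d (shift c) (EVar 0)) (EBit (EVar 0) (shift a))).

Lemma sem_EOne env c : sem (EOne c) env = mfg_one (sem c env).
Proof.
rewrite /EOne sem_ELeast sem_EOrder; apply: eq_least_below => y.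
by rewrite sem_EEq sem_EMfgMul sem_shift eqb0 negbK.
Qed.

Lemma sem_EInv env c a : sem (EInv c a) env = mfg_inv (sem c env) (sem a env).
Proof.
rewrite /EInv sem_ELeast sem_EOrder; apply: eq_least_below => y.
by rewrite sem_EEq sem_EMfgMul sem_EOne !sem_shift eqb0 negbK.
Qed.

Lemma sem_EWord env c k (a : 'I_k -> prexp) w :
  sem (EWord c a w) env = mfg_word (sem c env) (fun l => sem (a l) env) w.
Proof.
elim: w => [|[l b] w IH]; first exact: sem_EOne.
rewrite mfg_word_cons -IH.
have -> : EWord c a ((l, b) :: w) =
  EMfgMul c (if b then EInv c (a l) else a l) (EWord c a w) by [].
by rewrite sem_EMfgMul; case: b => //; rewrite sem_EInv.
Qed.

Lemma sem_EBit env X x : (sem (EBit X x) env != 0) = bitn (sem X env) (sem x env).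
Proof.
rewrite /EBit sem_EMod ?sem_EDiv ?sem_EPow ?sem_ENat ?expn_gt0 // modn2 /bitn.
by case: odd.
Qed.

Lemma sem_EGenClosed env d c X :
  (sem (EGenClosed d c X) env != 0) <-> gen_closed (sem c env) d (sem X env).
Proof.
rewrite /EGenClosed sem_EAnd sem_EBit sem_EOne /gen_closed.
set step := EImp _ _.
have stepE x i : (sem step (scons i (scons x env)) != 0) =
    bitn (sem X env) x ==> bitn (sem X env) (mfg_mul (sem c env) (mfg_val (sem c env) i) x).
  by rewrite sem_EImp !sem_EBit sem_EMfgMul sem_EMfgVal !sem_shift.
split.
- case/andP => -> /sem_EForallP; rewrite sem_EOrder => H; split => // x hx i hi.
  by apply/implyP; rewrite -stepE; move/sem_EForallP: (H x hx); rewrite sem_ENat; apply.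
- case=> -> H; apply/sem_EForallP => x; rewrite sem_EOrder => hx.
  by apply/sem_EForallP => i; rewrite sem_ENat stepE => hi; apply/implyP; apply: H.
Qed.

Lemma sem_EInGen env d c a :
  (sem (EInGen d c a) env != 0) <-> in_gen (sem c env) d (sem a env).
Proof.
rewrite /EInGen sem_EForallP sem_EPow sem_ENat sem_EOrder /in_gen.
have E X : sem (EImp (EGenClosed d (shift c) (EVar 0)) (EBit (EVar 0) (shift a))) (scons X env)
    != 0 = (sem (EGenClosed d (shift c) (EVar 0)) (scons X env) != 0) ==> bitn X (sem a env).
  by rewrite sem_EImp sem_EBit sem_shift.
split=> H X hX; move: (H X hX).
- by rewrite E => /implyP Hi cl; apply/Hi/sem_EGenClosed; rewrite sem_shift.
- by rewrite E => Hi; apply/implyP => /sem_EGenClosed; rewrite sem_shift; apply: Hi.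
Qed.

(** * The test for the quotient *)

Definition prepend k (a : nat -> nat) (env : nat -> nat) : nat -> nat :=
  fun i => if i < k then a i else env (i - k).

Fixpoint EForallN k bnd body :=
  if k is k'.+1 then EForall bnd (EForallN k' (shift bnd) body) else body.

Lemma prepend_scons k a x env :
  prepend k a (scons x env) =1 prepend k.+1 (fun l => if l < k then a l else x) env.
Proof.
move=> i; rewrite /prepend; case: (ltngtP i k) => hi.
- by rewrite ltnS (ltnW hi).
- by rewrite ltnNge hi (_ : i - k = (i - k.+1).+1) //; lia.
- by rewrite hi ltnSn subnn.
Qed.

Lemma prepend0 a env : prepend 0 a env =1 env.
Proof. by move=> i; rewrite /prepend subn0. Qed.

Lemma sem_EForallN k bnd body env : (sem (EForallN k bnd body) env != 0) <->
  (forall a, (forall l, l < k -> a l < sem bnd env) -> sem body (prepend k a env) != 0).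
Proof.
elim: k bnd env => [|k IH] bnd env /=.
  split => [H a _|H]; first by rewrite (eq_sem _ (prepend0 a env)).
  by rewrite -(eq_sem _ (prepend0 (fun=> 0) env)); apply: H.
rewrite sem_EForallP; split => [H a ha | H x hx].
- have Ea : prepend k.+1 (fun l => if l < k then a l else a k) env =1 prepend k.+1 a env.
    by move=> i; rewrite /prepend; case: ifP => // hi; case: ifP => // /negbT hik; congr a; lia.
  have /(_ a) := proj1 (IH _ _) (H (a k) (ha k (ltnSn k))).
  rewrite sem_shift (eq_sem _ (prepend_scons _ _ _ _)) (eq_sem _ Ea).
  by apply=> l hl; apply/ha/ltnW.
- apply/IH => a; rewrite sem_shift => ha.
  rewrite (eq_sem _ (prepend_scons _ _ _ _)); apply: H => l _.
  by case: ifP => [/ha|].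
Qed.

Definition EAll (l : seq prexp) := foldr EAnd (ENat 1) l.

Lemma sem_EAll env (T : eqType) (f : T -> prexp) (s : seq T) :
  (sem (EAll (map f s)) env != 0) <-> (forall x, x \in s -> sem (f x) env != 0).
Proof.
suff -> : (sem (EAll (map f s)) env != 0) = all (fun x => sem (f x) env != 0) s.
  by split => /allP.
elim: s => [//|x s IH].
have -> : EAll (map f (x :: s)) = EAnd (f x) (EAll (map f s)) by [].
by rewrite sem_EAnd IH.
Qed.

Definition EInGenAll k d c := EAll [seq EInGen d c (EVar l) | l <- iota 0 k].

Lemma sem_EInGenAll env k d c : (sem (EInGenAll k d c) env != 0) <->
  (forall l, l < k -> in_gen (sem c env) d (env l)).
Proof.
rewrite sem_EAll; split => [H l hl | H l].
- by move: (H l); rewrite mem_iota add0n hl => /(_ isT) /sem_EInGen.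
- by rewrite mem_iota add0n => /andP [_ hl]; apply/sem_EInGen; apply: H.
Qed.

Definition kills_relations d m (wr : 'I_m -> word d) p (k : 'I_p -> nat)
    (v : forall j, word (k j)) c :=
  (forall i, mfg_word c (fun l : 'I_d => mfg_val c l) (wr i) = mfg_one c) /\
  (forall j (a : 'I_(k j) -> nat), (forall l, a l < mfg_order c /\ in_gen c d (a l)) ->
     mfg_word c a (v j) = mfg_one c).

(* Below, variable 0 holds the code of the marked finite group; in [ELawTrivial]
   the letters of the law come first and the code is variable [kj]. *)
Definition ERelatorTrivial d (w : word d) :=
  EEq (EWord (EVar 0) (fun l : 'I_d => EMfgVal (EVar 0) (ENat l)) w) (EOne (EVar 0)).

Definition ELawTrivial d kj (vj : word kj) :=
  EForallN kj (EOrder (EVar 0)) (EImp (EInGenAll kj d (EVar kj))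
    (EEq (EWord (EVar kj) (fun l : 'I_kj => EVar l) vj) (EOne (EVar kj)))).

Definition EKillsRelations d m (wr : 'I_m -> word d) p (k : 'I_p -> nat)
    (v : forall j, word (k j)) :=
  EAnd (EAll [seq ERelatorTrivial (wr i) | i <- enum 'I_m])
       (EAll [seq ELawTrivial d (v j) | j <- enum 'I_p]).

Lemma sem_ERelatorTrivial env d w : (sem (@ERelatorTrivial d w) env != 0) =
  (mfg_word (env 0) (fun l : 'I_d => mfg_val (env 0) l) w == mfg_one (env 0)).
Proof.
rewrite sem_EEq sem_EWord sem_EOne eqb0 negbK sem_EVar.
rewrite (@eq_mfg_word _ _ _ (fun l : 'I_d => mfg_val (env 0) l)) // => l.
by rewrite sem_EMfgVal sem_ENat.
Qed.

Lemma sem_ELawTrivial env d kj (vj : word kj) : (sem (ELawTrivial d vj) env != 0) <->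
  (forall a : 'I_kj -> nat, (forall l, a l < mfg_order (env 0) /\ in_gen (env 0) d (a l)) ->
     mfg_word (env 0) a vj = mfg_one (env 0)).
Proof.
rewrite /ELawTrivial sem_EForallN sem_EOrder sem_EVar.
have code a : prepend kj a env kj = env 0 by rewrite /prepend ltnn subnn.
have bodyE a : sem (EImp (EInGenAll kj d (EVar kj))
      (EEq (EWord (EVar kj) (fun l : 'I_kj => EVar l) vj) (EOne (EVar kj))))
      (prepend kj a env) != 0 =
    (sem (EInGenAll kj d (EVar kj)) (prepend kj a env) != 0) ==>
    (mfg_word (env 0) (fun l : 'I_kj => a l) vj == mfg_one (env 0)).
  rewrite sem_EImp sem_EEq sem_EWord sem_EOne sem_EVar code eqb0 negbK.
  by congr (_ ==> (_ == _)); apply: eq_mfg_word => l; rewrite sem_EVar /prepend ltn_ord.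
have inGenE a : (sem (EInGenAll kj d (EVar kj)) (prepend kj a env) != 0) <->
    (forall l, l < kj -> in_gen (env 0) d (a l)).
  by rewrite sem_EInGenAll sem_EVar code; split => H l hl; move: (H l hl); rewrite /prepend hl.
split => H a ha.
- pose a' x := if insub x is Some l then a l else 0.
  have a'E (l : 'I_kj) : a' l = a l by rewrite /a' valK.
  have a'ok l : l < kj -> a' l < mfg_order (env 0) /\ in_gen (env 0) d (a' l).
    by move=> hl; rewrite -[l]/(val (Ordinal hl)) a'E; apply: ha.
  have := H a' (fun l hl => proj1 (a'ok l hl)); rewrite bodyE => /implyP imp.
  by rewrite -(eq_mfg_word _ _ a'E); apply/eqP/imp/inGenE => l /a'ok [].
- rewrite bodyE; apply/implyP => /inGenE inG; apply/eqP/H => l.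
  by split; [apply: ha | apply: inG].
Qed.

Lemma sem_EKillsRelations env d m wr p k v :
  (sem (@EKillsRelations d m wr p k v) env != 0) <-> kills_relations wr v (env 0).
Proof.
rewrite sem_EAnd; split.
- case/andP => /sem_EAll Hr /sem_EAll Hv; split.
  + by move=> i; apply/eqP; rewrite -sem_ERelatorTrivial; apply: Hr; rewrite mem_enum.
  + by move=> j; apply/sem_ELawTrivial/Hv; rewrite mem_enum.
- case=> Hr Hv; apply/andP; split; apply/sem_EAll.
  + by move=> i _; rewrite sem_ERelatorTrivial Hr.
  + by move=> j _; apply/sem_ELawTrivial/Hv.
Qed.

(** * Homomorphisms to marked finite groups *)

Lemma finite_inj_surj n (f : nat -> nat) (S : pred nat) :
  (forall x, x < n -> S x -> f x < n /\ S (f x)) ->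
  {in [pred x | (x < n) && S x] &, injective f} ->
  forall y, y < n -> S y -> exists z, [/\ z < n, S z & f z = y].
Proof.
move=> fS f_inj y hy Sy.
pose g (x : 'I_n) : 'I_n := if insub (f x) is Some z then z else x.
have gE (x : 'I_n) : S x -> val (g x) = f x.
  by move=> Sx; rewrite /g insubT //; case: (fS x (ltn_ord x) Sx).
pose A := [set x : 'I_n | S x].
have gA : [set g x | x in A] \subset A.
  apply/subsetP => y' /imsetP [x]; rewrite !inE => Sx ->.
  by rewrite gE //; case: (fS x (ltn_ord x) Sx).
have card_gA : #|[set g x | x in A]| = #|A|.
  apply: card_in_imset => x1 x2; rewrite !inE => S1 S2 E; apply: val_inj.
  by apply: f_inj; rewrite ?inE ?ltn_ord // -(gE _ S1) -(gE _ S2) E.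
have : Ordinal hy \in A by rewrite inE.
have /eqP <- : [set g x | x in A] == A by rewrite eqEcard gA card_gA leqnn.
case/imsetP => z; rewrite inE => Sz Ez; exists z; split => //.
by rewrite -gE // -Ez.
Qed.

Lemma exists_bitmask (P : nat -> Prop) N :
  exists2 X, X < 2 ^ N & forall x, x < N -> bitn X x <-> P x.
Proof.
elim: N => [|N [X ltX XP]]; first by exists 0.
have bitn_high Y x : x < N -> bitn (Y + 2 ^ N) x = bitn Y x.
  move=> hx; rewrite /bitn divnDr; last exact/dvdn_exp2l/ltnW.
  rewrite -(subnK (ltnW hx)) expnD mulnK ?expn_gt0 // oddD oddX.
  by rewrite subn_eq0 leqNgt hx addbF.
case: (classic (P N)) => PN.
- exists (X + 2 ^ N); first by rewrite expnS mul2n -addnn ltn_add2r.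
  move=> x; rewrite ltnS leq_eqVlt => /orP [/eqP ->|hx]; last by rewrite bitn_high // XP.
  by rewrite /bitn divnDr // divnn expn_gt0 divn_small.
- exists X; first by rewrite expnS mul2n -addnn ltn_addr.
  move=> x; rewrite ltnS leq_eqVlt => /orP [/eqP ->|]; last exact: XP.
  by rewrite /bitn divn_small.
Qed.

Section ValidCode.
Variables (d c : nat).
Hypothesis c_valid : valid_mfg d c.
Local Notation n := (mfg_order c).
Local Notation mul := (mfg_mul c).
Local Notation one := (mfg_one c).
Local Notation inv := (mfg_inv c).

Lemma mfg_mul_lt a b : a < n -> b < n -> mul a b < n.
Proof. by case: c_valid => _ H _ _ _; apply: H. Qed.

Lemma mfg_val_lt i : i < d -> mfg_val c i < n.
Proof. by case: c_valid => _ _ H _ _; apply: H. Qed.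

Lemma mfg_mulA a b e : a < n -> b < n -> e < n -> mul (mul a b) e = mul a (mul b e).
Proof. by case: c_valid => _ _ _ H _; apply: H. Qed.

Lemma mfg_one_spec : one < n /\ forall a, a < n ->
  [/\ mul one a = a, mul a one = a & exists2 b, b < n & mul a b = one /\ mul b a = one].
Proof.
case: c_valid => _ _ _ mulA [e lt_e eP].
suff -> : one = e by [].
apply: least_belowE => //; first by case: (eP e lt_e) => ->.
move=> y lt_y_e; apply/negP => /eqP yy.
have lt_y : y < n by apply: ltn_trans lt_e.
case: (eP y lt_y) => _ ye [b lt_b [yb _]].
have := mulA y y b lt_y lt_y lt_b; rewrite yy yb ye => E.
by rewrite E ltnn in lt_y_e.
Qed.

Lemma mfg_one_lt : one < n. Proof. by case: mfg_one_spec. Qed.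
Lemma mfg_mul1 a : a < n -> mul one a = a. Proof. by case: mfg_one_spec => _ H /H []. Qed.
Lemma mfg_mul1r a : a < n -> mul a one = a. Proof. by case: mfg_one_spec => _ H /H []. Qed.

Lemma mfg_mulI a x y : a < n -> x < n -> y < n -> mul a x = mul a y -> x = y.
Proof.
move=> ha hx hy E; case: mfg_one_spec => _ /(_ a ha) [_ _ [b hb [_ ba]]].
by rewrite -(mfg_mul1 hx) -(mfg_mul1 hy) -ba !mfg_mulA // E.
Qed.

Lemma mfg_idem_one x : x < n -> mul x x = x -> x = one.
Proof. by move=> hx xx; apply: (@mfg_mulI x) => //; [exact: mfg_one_lt | rewrite mfg_mul1r]. Qed.

Lemma mfg_inv_spec a : a < n -> [/\ inv a < n, mul a (inv a) = one & mul (inv a) a = one].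
Proof.
move=> ha; case: mfg_one_spec => _ /(_ a ha) [_ _ [b hb [ab ba]]].
suff -> : inv a = b by [].
apply: least_belowE => //; first by rewrite ab.
move=> y lt_y_b; apply/negP => /eqP ay.
have lt_y : y < n by apply: ltn_trans hb.
have yb : y = b by apply: (@mfg_mulI a) => //; rewrite ay ab.
by rewrite yb ltnn in lt_y_b.
Qed.

Lemma mfg_inv_uniq a y : a < n -> y < n -> mul a y = one -> inv a = y.
Proof.
move=> ha hy ay; case: (mfg_inv_spec ha) => lt_inv a_inv _.
by apply: (@mfg_mulI a) => //; rewrite a_inv.
Qed.

Lemma mfg_inv1 : inv one = one.
Proof. by apply: mfg_inv_uniq; rewrite ?mfg_mul1 ?mfg_one_lt. Qed.

Lemma mfg_word_lt k (a : 'I_k -> nat) w : (forall l, a l < n) -> mfg_word c a w < n.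
Proof.
move=> ha; elim: w => [|[l b] w IH]; first exact: mfg_one_lt.
rewrite mfg_word_cons; apply: mfg_mul_lt => //.
by case: b; [case: (mfg_inv_spec (ha l)) | apply: ha].
Qed.

Lemma in_gen_word w : in_gen c d (mfg_word c (fun l : 'I_d => mfg_val c l) w).
Proof.
move=> X ltX [X1 Xmul].
have val_lt (l : 'I_d) : mfg_val c l < n by apply: mfg_val_lt.
elim: w => [//|[l b] w IH]; rewrite mfg_word_cons.
have := mfg_word_lt w val_lt; set y := mfg_word c _ w => lt_y.
case: b; last exact: Xmul.
(* Left multiplication by a marked element maps the finite set [X] injectively
   into itself, hence onto itself. *)
have mul_inj : {in [pred x | (x < n) && bitn X x] &, injective (mul (mfg_val c l))}.
  by move=> x x' /andP [hx _] /andP [hx' _]; apply: mfg_mulI.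
have [z [lt_z Xz <-]] := finite_inj_surj
  (fun x hx Xx => conj (mfg_mul_lt (val_lt l) hx) (Xmul x hx l (ltn_ord l) Xx))
  mul_inj lt_y IH.
case: (mfg_inv_spec (val_lt l)) => lt_inv _ inv_val.
by rewrite -mfg_mulA // inv_val mfg_mul1.
Qed.

Section Homomorphism.
Variables (G : groupType) (phi : G -> nat).
Hypothesis phi_lt : forall x, phi x < n.
Hypothesis phiM : forall x y, phi (x * y)%g = mul (phi x) (phi y).

Lemma mfg_hom1 : phi 1%g = one.
Proof. by apply: mfg_idem_one => //; rewrite -phiM mulg1. Qed.

Lemma mfg_homV x : phi x^-1%g = inv (phi x).
Proof. by apply/esym/mfg_inv_uniq => //; rewrite -phiM mulgV mfg_hom1. Qed.

Lemma mfg_hom_word k (a : 'I_k -> G) w :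
  phi (eval_word a w) = mfg_word c (fun l => phi (a l)) w.
Proof.
elim: w => [|[l b] w IH]; first exact: mfg_hom1.
by rewrite mfg_word_cons -IH; case: b; rewrite /= phiM // mfg_homV.
Qed.

Lemma mfg_hom_normal_closure (X : G -> Prop) :
  (forall x, X x -> phi x = one) -> forall g, in_normal_closure X g -> phi g = one.
Proof.
move=> phiX _ [l [lX ->]]; elim: l lX => [|[[x y] b] l IH] lX /=; first exact: mfg_hom1.
have phix : phi x = one by apply/phiX/(lX (x, y, b))/mem_head.
have phixb : phi (if b then x^-1 else x)%g = one.
  by case: (b); rewrite ?mfg_homV phix ?mfg_inv1.
rewrite phiM IH => [|t lt]; last by apply: lX; rewrite inE lt orbT.
rewrite mfg_mul1r // conjgE !phiM phixb mfg_mul1 // mfg_homV.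
by case: (mfg_inv_spec (phi_lt y)).
Qed.

End Homomorphism.
End ValidCode.

Section HomImage.
Variables (d c : nat) (G : groupType) (gen : 'I_d -> G) (phi : G -> nat).
Hypothesis c_valid : valid_mfg d c.
Hypothesis phi_lt : forall x, phi x < mfg_order c.
Hypothesis phiM : forall x y, phi (x * y)%g = mfg_mul c (phi x) (phi y).
Hypothesis phi_gen : forall i, phi (gen i) = mfg_val c i.

Lemma in_gen_hom : generates gen -> forall g, in_gen c d (phi g).
Proof.
move=> gen_gen g; have [w ->] := gen_gen g; rewrite (mfg_hom_word c_valid phi_lt phiM).
by rewrite (eq_mfg_word _ _ phi_gen); apply: in_gen_word.
Qed.

Lemma in_gen_hom_image a : a < mfg_order c -> in_gen c d a -> exists g, phi g = a.
Proof.
move=> lt_a in_a; have [X ltX XP] := exists_bitmask (fun x => exists g, phi g = x) (mfg_order c).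
apply/(XP _ lt_a)/in_a => //; split.
  apply/XP; first exact: mfg_one_lt c_valid.
  by exists 1%g; exact: (mfg_hom1 c_valid phi_lt phiM).
move=> x lt_x i lt_i /(XP _ lt_x) [g <-].
have lt_mul := mfg_mul_lt c_valid (mfg_val_lt c_valid lt_i) (phi_lt g).
apply/(XP _ lt_mul).
by exists (gen (Ordinal lt_i) * g)%g; rewrite phiM phi_gen.
Qed.

End HomImage.

Section Morphism.
Variables (G H : groupType) (pi : G -> H).
Hypothesis piM : multiplicative_map pi.

Lemma morph1 : pi 1%g = 1%g.
Proof. by apply: (@mulgI _ (pi 1%g)); rewrite mulg1 -piM mulg1. Qed.

Lemma morphV x : pi x^-1%g = (pi x)^-1%g.
Proof. by apply/esym/mulg1_eq; rewrite -piM mulgV morph1. Qed.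

Lemma morph_eval_word k (a : 'I_k -> G) w :
  pi (eval_word a w) = eval_word (fun l => pi (a l)) w.
Proof.
elim: w => [|[l b] w IH]; first exact: morph1.
by rewrite /= piM IH; case: b => //; rewrite morphV.
Qed.

Lemma generates_morph d (gen : 'I_d -> G) :
  (forall h, exists g, pi g = h) -> generates gen -> generates (fun i => pi (gen i)).
Proof.
move=> pi_surj gen_gen h; have [g <-] := pi_surj h; have [w ->] := gen_gen g.
by exists w; rewrite morph_eval_word.
Qed.

Lemma mfg_hom_factor d c (phi : G -> nat) : valid_mfg d c ->
  (forall h, exists g, pi g = h) ->
  (forall x, phi x < mfg_order c) -> (forall x y, phi (x * y)%g = mfg_mul c (phi x) (phi y)) ->
  (forall g, pi g = 1%g -> phi g = mfg_one c) ->
  exists phiH : H -> nat, [/\ forall h, phiH h < mfg_order c,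
    forall x y, phiH (x * y)%g = mfg_mul c (phiH x) (phiH y) & forall g, phiH (pi g) = phi g].
Proof.
move=> c_valid pi_surj phi_lt phiM phi_ker.
have phi_pi g g' : pi g = pi g' -> phi g = phi g'.
  move=> E; have : phi (g^-1 * g')%g = mfg_one c.
    by apply: phi_ker; rewrite piM morphV E mulVg.
  rewrite phiM (mfg_homV c_valid phi_lt phiM) => inv_g'.
  have [inv_lt g_inv _] := mfg_inv_spec c_valid (phi_lt g).
  rewrite -(mfg_mul1 c_valid (phi_lt g')) -g_inv.
  rewrite (mfg_mulA c_valid (phi_lt g) inv_lt (phi_lt g')) inv_g'.
  by rewrite (mfg_mul1r c_valid (phi_lt g)).
have pre_ex h : exists g, pi g == h by have [g <-] := pi_surj h; exists g.
pose pre h := xchoose (pre_ex h).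
have preK h : pi (pre h) = h by apply/eqP/(xchooseP (pre_ex h)).
exists (fun h => phi (pre h)); split => [h|x y|g]; first exact: phi_lt.
- by rewrite -phiM; apply: phi_pi; rewrite piM !preK.
- by apply: phi_pi; rewrite preK.
Qed.

End Morphism.

Lemma mem_normal_closure (G : groupType) (X : G -> Prop) x : X x -> in_normal_closure X x.
Proof.
move=> Xx; exists [:: (x, 1%g, false)]; split; first by move=> t; rewrite inE => /eqP ->.
by rewrite /= conjg1 mulg1.
Qed.

(** * Combining programs *)

Lemma computes_all2 g1 g2 xs ys : computes_all [:: g1; g2] xs ys ->
  exists y1 y2, [/\ ys = [:: y1; y2], computes g1 xs y1 & computes g2 xs y2].
Proof.
case: ys => [|y1 [|y2 [|y3 ys]]]; cbn [computes_all]; try tauto.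
by case=> h1 [h2 _]; exists y1, y2.
Qed.

Definition PAdd (p q : prog) := PComp (compile (EAdd (EVar 0) (EVar 1))) [:: p; q].

Lemma computes_PAdd p q xs a b :
  computes p xs a -> computes q xs b -> computes (PAdd p q) xs (a + b).
Proof.
move=> pa qb; apply/computes_PComp; exists [:: a; b]; split => //.
by have := computes_compile (EAdd (EVar 0) (EVar 1)) [:: a; b]; rewrite sem_EAdd.
Qed.

Definition PBoth (p q : prog) := PComp PZero [:: p; q].

Lemma halts_PBoth p q c : halts (PBoth p q) c <-> halts p c /\ halts q c.
Proof.
split.
- case=> y /computes_PComp [ys [/computes_all2 [y1 [y2 [_ h1 h2]]] _]].
  by split; [exists y1 | exists y2].
- case=> [[y1 h1] [y2 h2]]; exists 0; apply/computes_PComp; exists [:: y1; y2].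
  by split; [split => //; split | apply: computes_PZero].
Qed.

(* Recursion on the value of [t] serves as a conditional: [q] is run on the
   input iff [t] returns a positive value. *)
Definition PUnless (t q : prog) := PComp (PRec PZero (PComp q [:: PProj 2])) [:: t; PProj 0].

Lemma halts_PUnless t q c b :
  computes t [:: c] b -> (halts (PUnless t q) c <-> b = 0 \/ halts q c).
Proof.
have args b' : computes t [:: c] b' -> computes_all [:: t; PProj 0] [:: c] [:: b'; c].
  by move=> tb; do !split => //; apply: (computes_PProj 0 [:: c]).
have run_q n y' y : computes (PComp q [:: PProj 2]) [:: n; y'; c] y <-> computes q [:: c] y.
  rewrite computes_PComp; split => [[zs [hz hq]]|hq].
    case: zs hz hq => [|z [|z' zs]]; cbn [computes_all]; try tauto.
    by case=> /computes_det /(_ (computes_PProj 2 [:: n; y'; c])) -> _.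
  by exists [:: c]; do !split => //; apply: (computes_PProj 2 [:: n; y'; c]).
move=> tb; split.
- case=> y /computes_PComp [ys [/computes_all2 [b' [c' [-> tb' c'E]]] h]].
  have Eb : b' = b := computes_det tb' tb.
  have Ec : c' = c := computes_det c'E (computes_PProj 0 [:: c]).
  subst b' c'; case: b tb tb' h => [|n] _ _ h; [by left | right].
  by case/computes_PRecS: h => y' [_ /run_q hq]; exists y.
- case: b tb => [|n] tb.
    move=> _; exists 0; apply/computes_PComp; exists [:: 0; c]; split; first exact: args.
    exact/computes_PRec0/computes_PZero.
  case=> [nE|[y hq]]; first by []; exists y; apply/computes_PComp; exists [:: n.+1; c].
  split; first exact: args.
  elim: n {tb} => [|n IH]; apply/computes_PRecS.
  + by exists 0; split; [apply/computes_PRec0/computes_PZero | apply/run_q].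
  + by exists y; split; [apply: IH | apply/run_q].
Qed.

(** * Transfer to the quotient *)

Section Quotient.
Variables (G H : groupType) (pi : G -> H).
Variables (m : nat) (r : 'I_m -> G) (p : nat) (k : 'I_p -> nat) (v : forall j, word (k j)).
Hypothesis piM : multiplicative_map pi.
Hypothesis pi_surj : forall h, exists g, pi g = h.
Hypothesis pi_ker : forall g : G, pi g = 1%g <->
  in_normal_closure (fun x : G => (exists i, x = r i) \/
                                  (exists j (a : 'I_(k j) -> G), x = eval_word a (v j))) g.
Variables (d : nat) (gen : 'I_d -> G) (wr : 'I_m -> word d).
Hypothesis gen_generates : generates gen.
Hypothesis wr_spec : forall i, r i = eval_word gen (wr i).

Lemma extends_quotient_kills c : valid_mfg d c ->
  extends (fun i => pi (gen i)) c -> extends gen c /\ kills_relations wr v c.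
Proof.
move=> c_valid [phiH [phiH_lt phiHM phiH_gen]].
have phi_lt x : phiH (pi x) < mfg_order c by [].
have phiM x y : phiH (pi (x * y)%g) = mfg_mul c (phiH (pi x)) (phiH (pi y)) by rewrite piM.
have phi_hom := mfg_hom_word c_valid phi_lt phiM.
have phi_ker x : pi x = 1%g -> phiH (pi x) = mfg_one c.
  by move->; exact: (mfg_hom1 c_valid phiH_lt phiHM).
split; first by exists (fun x => phiH (pi x)).
split=> [i|j a a_in].
- rewrite -(eq_mfg_word _ _ phiH_gen) -phi_hom -wr_spec phi_ker //.
  by apply/pi_ker/mem_normal_closure; left; exists i.
- have /fin_all_exists [b bE] : forall l, exists g, phiH (pi g) = a l.
    by move=> l; have [? ?] := a_in l; apply: (in_gen_hom_image c_valid phi_lt phiM phiH_gen).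
  rewrite -(eq_mfg_word _ _ bE) -phi_hom phi_ker //.
  by apply/pi_ker/mem_normal_closure; right; exists j, b.
Qed.

Lemma extends_quotient_of_kills c : valid_mfg d c ->
  extends gen c -> kills_relations wr v c -> extends (fun i => pi (gen i)) c.
Proof.
move=> c_valid [phi [phi_lt phiM phi_gen]] [kill_r kill_v].
have phi_hom := mfg_hom_word c_valid phi_lt phiM.
have phi_rel x : (exists i, x = r i) \/ (exists j (a : 'I_(k j) -> G), x = eval_word a (v j)) ->
    phi x = mfg_one c.
  case=> [[i ->]|[j [a ->]]].
  - by rewrite wr_spec phi_hom (eq_mfg_word _ _ phi_gen) kill_r.
  - rewrite phi_hom; apply: kill_v => l; split; first exact: phi_lt.
    exact: (in_gen_hom c_valid phi_lt phiM phi_gen gen_generates).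
have phi_ker g : pi g = 1%g -> phi g = mfg_one c.
  by move/pi_ker; apply: (mfg_hom_normal_closure c_valid phi_lt phiM phi_rel).
have [phiH [phiH_lt phiHM phiH_pi]] := mfg_hom_factor piM c_valid pi_surj phi_lt phiM phi_ker.
by exists phiH; split => // i; rewrite phiH_pi.
Qed.

Lemma extends_quotient c : valid_mfg d c ->
  extends (fun i => pi (gen i)) c <-> extends gen c /\ kills_relations wr v c.
Proof.
move=> c_valid; split; first exact: extends_quotient_kills.
by case; apply: extends_quotient_of_kills.
Qed.

Lemma kills_relationsE c :
  kills_relations wr v c <-> sem (EKillsRelations wr v) (nth 0 [:: c]) != 0.
Proof. by rewrite sem_EKillsRelations. Qed.

Lemma computes_kills_test c :
  computes (compile (ENot (EKillsRelations wr v))) [:: c]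
    (sem (EKillsRelations wr v) (nth 0 [:: c]) == 0).
Proof. by rewrite -sem_ENot; apply: computes_compile. Qed.

Lemma CFQ_wrt_quotient : CFQ_wrt gen -> CFQ_wrt (fun i => pi (gen i)).
Proof.
case=> pG pG_ok; exists (PAdd pG (compile (ENot (EKillsRelations wr v)))) => c c_valid.
have [b0 pG_b0 b0E] := pG_ok c c_valid.
exists (b0 + (sem (EKillsRelations wr v) (nth 0 [:: c]) == 0)).
  exact: computes_PAdd pG_b0 (computes_kills_test c).
rewrite extends_quotient // -b0E kills_relationsE.
split => [/eqP | [-> /negbTE ->] //].
by rewrite addn_eq0 eqb0 => /andP [/eqP -> ->].
Qed.

Lemma ReFQ_wrt_quotient : ReFQ_wrt gen -> ReFQ_wrt (fun i => pi (gen i)).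
Proof.
case=> pG pG_ok; exists (PBoth pG (PUnless (compile (ENot (EKillsRelations wr v))) loop)).
move=> c c_valid; rewrite halts_PBoth (halts_PUnless _ (computes_kills_test c)).
rewrite extends_quotient // -pG_ok // kills_relationsE nat_of_bool_eq0.
have loop_never : ~ halts loop c by case=> y /loop_diverges.
tauto.
Qed.

Lemma coReFQ_wrt_quotient : coReFQ_wrt gen -> coReFQ_wrt (fun i => pi (gen i)).
Proof.
case=> pG pG_ok; exists (PUnless (compile (ENot (ENot (EKillsRelations wr v)))) pG).
move=> c c_valid; have test := computes_compile (ENot (ENot (EKillsRelations wr v))) [:: c].
rewrite (halts_PUnless _ test) extends_quotient // pG_ok // kills_relationsE !sem_ENot.
rewrite nat_of_bool_eq0 eqb0 !negbK; split.
- by case=> [/eqP D0 [_] | nE [E _]]; [rewrite D0 | apply: nE].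
- by move=> nEK; case: eqP => D0; [left | right => E; apply/nEK; split => //; apply/eqP].
Qed.

End Quotient.

Lemma words_of_generates (G : groupType) d (gen : 'I_d -> G) m (r : 'I_m -> G) :
  generates gen -> exists wr : 'I_m -> word d, forall i, r i = eval_word gen (wr i).
Proof.
move=> gen_gen; have /fin_all_exists [wr wrE] : forall i, exists w, r i = eval_word gen w.
  by move=> i; apply: gen_gen.
by exists wr.
Qed.

Local Open Scope group_scope.

Theorem mainTheorem11 (G H : groupType) (pi : G -> H)
    (m : nat) (r : 'I_m -> G)
    (p : nat) (k : 'I_p -> nat) (v : forall j : 'I_p, word (k j)) :
  finitely_generated G ->
  multiplicative_map pi ->
  (forall h : H, exists g : G, pi g = h) ->
  (forall g : G, pi g = 1 <->
     in_normal_closure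
       (fun x : G => (exists i : 'I_m, x = r i) \/
                     (exists (j : 'I_p) (a : 'I_(k j) -> G), x = eval_word a (v j)))
       g) ->
  [/\ CFQ G -> CFQ H, ReFQ G -> ReFQ H & coReFQ G -> coReFQ H].
Proof.
(* Finite generation is already part of each of CFQ, ReFQ and co-ReFQ. *)
move=> _ piM pi_surj pi_ker.
split=> -[d [gen [gen_gen G_ok]]]; exists d, (fun i => pi (gen i)).
all: split; first exact: generates_morph.
all: have [wr wrE] := words_of_generates r gen_gen.
- exact: (CFQ_wrt_quotient piM pi_surj pi_ker gen_gen wrE G_ok).
- exact: (ReFQ_wrt_quotient piM pi_surj pi_ker gen_gen wrE G_ok).
- exact: (coReFQ_wrt_quotient piM pi_surj pi_ker gen_gen wrE G_ok).
Qed.
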